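(* Let $m<n$, let $A\in\mathbb{R}^{m\times n}$ and $b\in\mathbb{R}^{m}$, and assume that the system $Ax=b$ has a solution. Partition $A=[B~\tilde{B}]$ with $B\in\mathbb{R}^{m\times m}$ and $\tilde{B}\in\mathbb{R}^{m\times(n-m)}$. Assume that every diagonal entry of $B$ is nonzero and that every row $\tilde{B}_i$ of $\tilde{B}$ is nonzero. Let $L$ be the lower triangular part of $B$ (including the diagonal), $R=B-L$, $N(\tilde{B})=\operatorname{diag}(\|\tilde{B}_1\|_1,\ldots,\|\tilde{B}_m\|_1)$, and let $s(\tilde{B})\in\mathbb{R}^{(n-m)\times m}$ be the matrix whose $(j,i)$ entry is the sign ($1$, $0$ or $-1$) of the $(j,i)$ entry of $\tilde{B}^T$. Starting from any $x^{(0)}=\begin{bmatrix}x_1^{(0)}\\ x_2^{(0)}\end{bmatrix}$ with $x_1^{(0)}\in\mathbb{R}^m$, $x_2^{(0)}\in\mathbb{R}^{n-m}$, define for $k\ge 0$ the generalized Gauss–Seidel iteration $$x_2^{(k+1)}=x_2^{(k)}+s(\tilde{B})\,d^{(k)},\qquad d^{(k)}_i=\frac{b_i-B_ix_1^{(k)}-\tilde{B}_ix_2^{(k)}}{m\|\tilde{B}_i\|_1}\ (i=1,\ldots,m),$$ $$x_1^{(k+1)}=L^{-1}\big(-Rx_1^{(k)}+b-\tilde{B}x_2^{(k+1)}\big),\qquad x^{(k+1)}=\begin{bmatrix}x_1^{(k+1)}\\ x_2^{(k+1)}\end{bmatrix},$$ where $B_i,\tilde{B}_i$ denote the $i$th rows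 of $B,\tilde{B}$. If, for some matrix norm $\|\cdot\|$ on $\mathbb{R}^{m\times m}$, $$\|I-BL^{-1}\|<1\quad\text{and}\quad \|mI-\tilde{B}\,s(\tilde{B})\,N(\tilde{B})^{-1}\|<m,$$ then the sequence $(x^{(k)})$ converges and its limit $x=\lim_k x^{(k)}$ is a solution of $Ax=b$.
   Context: $\|\cdot\|_1$ denotes the $\ell_1$-norm of a vector. The $x_2$-update is the iterative method of Wheaton–Awoniyi applied to $\tilde{B}y=b-Bx_1^{(k)}$, and the $x_1$-update is one Gauss–Seidel step for $Bz=b-\tilde{B}x_2^{(k+1)}$ starting at $x_1^{(k)}$. *)

From HB Require Import structures.
From mathcomp Require Import all_boot all_order all_algebra.
From mathcomp Require Import all_classical all_reals all_analysis.
Set Implicit Arguments. Unset Strict Implicit. Unset Printing Implicit Defensive.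
Import Order.TTheory GRing.Theory Num.Theory.
Import numFieldNormedType.Exports.
Local Open Scope ring_scope.

Definition matrix_norm (R : realType) (m : nat) (nu : 'M[R]_m -> R) : Prop :=
  [/\ forall M, 0 <= nu M,
      forall M, nu M = 0 -> M = 0,
      forall (a : R) M, nu (a *: M) = `|a| * nu M,
      forall M M', nu (M + M') <= nu M + nu M'
    & forall M M', nu (M *m M') <= nu M * nu M'].

Definition lower_part (R : realType) (m : nat) (B : 'M[R]_m) : 'M[R]_m :=
  \matrix_(i, j) if (j <= i)%N then B i j else 0.

Definition row_l1 (R : realType) (m p : nat) (Bt : 'M[R]_(m, p)) (i : 'I_m) : R :=
  \sum_(j < p) `|Bt i j|.

Definition Nmat (R : realType) (m p : nat) (Bt : 'M[R]_(m, p)) : 'M[R]_m :=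
  diag_mx (\row_i row_l1 Bt i).

Definition smat (R : realType) (m p : nat) (Bt : 'M[R]_(m, p)) : 'M[R]_(p, m) :=
  \matrix_(j, i) Num.sg (Bt i j).

Definition dvec (R : realType) (m p : nat) (B : 'M[R]_m) (Bt : 'M[R]_(m, p))
  (b : 'cV[R]_m) (x1 : 'cV[R]_m) (x2 : 'cV[R]_p) : 'cV[R]_m :=
  \col_i ((b i 0 - (B *m x1) i 0 - (Bt *m x2) i 0) / (m%:R * row_l1 Bt i)).

From HB Require Import structures.
From mathcomp Require Import all_boot all_order all_algebra.
From mathcomp Require Import all_classical all_reals all_analysis.
Set Implicit Arguments. Unset Strict Implicit. Unset Printing Implicit Defensive.
Import Order.TTheory GRing.Theory Num.Theory.
Import numFieldNormedType.Exports.
Local Open Scope ring_scope.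

(* With A = [B Bt], r_k = b - A x_k and S = s(Bt) N(Bt)^-1 / m, one step of the
   iteration is the residual correction x_{k+1} = x_k + H r_k for
   H = [L^-1 (I - Bt S); S], and its error matrix factors as
   I - A H = (I - B L^-1) (I - Bt S).  Both factors have norm < 1, so
   r_k = (I - A H)^k r_0 decays geometrically and A H is invertible.  Then
   x_k + H (A H)^-1 r_k is constant along the iteration, hence x_k converges to
   x_0 + H (A H)^-1 r_0, which solves A x = b. *)

Lemma mul_delta_mx_sandwich (R : pzRingType) (m n : nat) (M : 'M[R]_(m, n)) i j :
  delta_mx i i *m M *m delta_mx j j = M i j *: delta_mx i j.
Proof.
apply/matrixP => k l; rewrite !mxE (bigD1 j) //= big1 => [|t /negbTE tj]; last first.
  by rewrite [delta_mx _ _ t l]mxE tj andFb mulr0.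
rewrite mxE (bigD1 i) //= big1 => [|t /negbTE ti]; last first.
  by rewrite [delta_mx _ _ k t]mxE ti andbF mul0r.
rewrite !mxE !eqxx !addr0 andbT.
by case: (k == i); case: (l == j); rewrite ?mul1r ?mulr1 ?mul0r ?mulr0.
Qed.

Lemma mx_norm_entry_le (R : realType) (m n : nat) (M : 'M[R]_(m, n)) i j :
  `|M i j| <= `|M|.
Proof. by rewrite [leRHS]mx_normrE (le_bigmax _ (fun ij => `|M ij.1 ij.2|) (i, j)). Qed.

Lemma mx_norm_mulmx_le (R : realType) (m n p : nat)
    (X : 'M[R]_(m, n)) (Y : 'M[R]_(n, p)) :
  `|X *m Y| <= n%:R * `|X| * `|Y|.
Proof.
rewrite [leLHS]mx_normrE; apply: bigmax_le => [|[i j] _ /=].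
  by rewrite !mulr_ge0.
rewrite mxE (le_trans (ler_norm_sum _ _ _)) //.
apply: (@le_trans _ _ (\sum_(k < n) `|X| * `|Y|)).
  by apply: ler_sum => k _; rewrite normrM ler_pM ?mx_norm_entry_le.
by rewrite sumr_const card_ord -mulrA mulr_natl.
Qed.

Lemma geometric_bound_cvg (R : realType) (V : normedModType R) (u : nat -> V)
    (y : V) (C q : R) :
  0 <= q < 1 -> (forall k, `|y - u k| <= C * q ^+ k) -> (u @ \oo --> y)%classic.
Proof.
move=> /andP[q_ge0 q_lt1] u_near; apply/cvgrPdist_le => e e_gt0.
have /cvgr0Pnorm_le/(_ e e_gt0) : (geometric C q @ \oo --> 0)%classic.
  by apply: cvg_geometric; rewrite ger0_norm.
by apply: filterS => k; apply: le_trans (le_trans (u_near k) (ler_norm _)).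
Qed.

Section MatrixNorm.
Variables (R : realType) (m : nat) (nu : 'M[R]_m -> R).
Hypothesis nu_norm : matrix_norm nu.

Let nu_ge0 (M : 'M[R]_m) : 0 <= nu M. Proof. by case: nu_norm. Qed.
Let nu_mul (M N : 'M[R]_m) : nu (M *m N) <= nu M * nu N. Proof. by case: nu_norm. Qed.

Lemma matrix_norm_delta_gt0 i j : 0 < nu (delta_mx i j).
Proof.
case: nu_norm => _ nu_eq0 _ _ _; rewrite lt_def nu_ge0 andbT.
apply/eqP => /nu_eq0/matrixP/(_ i j); rewrite !mxE !eqxx.
by move/eqP; rewrite oner_eq0.
Qed.

Lemma matrix_norm_entry_le (M : 'M[R]_m) i j :
  `|M i j| <= nu (delta_mx i i) * nu (delta_mx j j) / nu (delta_mx i j) * nu M.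
Proof.
have [_ _ nuZ _ _] := nu_norm.
rewrite mulrAC ler_pdivlMr ?matrix_norm_delta_gt0 // -nuZ.
rewrite -mul_delta_mx_sandwich mulrAC.
exact: le_trans (nu_mul _ _) (ler_wpM2r (nu_ge0 _) (nu_mul _ _)).
Qed.

Lemma mx_norm_le_matrix_norm : exists2 c, 0 <= c & forall M, `|M| <= c * nu M.
Proof.
pose coef (ij : 'I_m * 'I_m) :=
  nu (delta_mx ij.1 ij.1) * nu (delta_mx ij.2 ij.2) / nu (delta_mx ij.1 ij.2).
have coef_ge0 ij : 0 <= coef ij by rewrite !mulr_ge0 ?invr_ge0.
exists (\sum_ij coef ij) => [|M]; first exact: sumr_ge0.
rewrite [leLHS]mx_normrE; apply: bigmax_le => [|ij _].
  by rewrite mulr_ge0 ?sumr_ge0.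
apply: le_trans (matrix_norm_entry_le M ij.1 ij.2) _; apply: ler_wpM2r => //.
by rewrite (bigD1 ij) //= lerDl sumr_ge0.
Qed.

Lemma matrix_norm_exprn_le (P : 'M[R]_m) k : nu (P ^+ k) <= nu 1%:M * nu P ^+ k.
Proof.
elim: k => [|k IHk]; first by rewrite expr0 mulr1.
rewrite exprS exprS mulrCA.
exact: le_trans (nu_mul _ _) (ler_wpM2l (nu_ge0 _) IHk).
Qed.

Lemma matrix_norm_lt1_unitmx (P : 'M[R]_m) : nu P < 1 -> 1%:M - P \in unitmx.
Proof.
have [_ nu_eq0 _ _ _] := nu_norm; move=> nuP_lt1.
rewrite -row_full_unit -cokermx_eq0; apply/eqP; set X := cokermx _.
have : (1%:M - P) *m X = 0 := mulmx_coker _.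
rewrite mulmxBl mul1mx => /eqP; rewrite subr_eq0 => /eqP PX.
apply: nu_eq0; apply/eqP; rewrite eq_le nu_ge0 andbT.
have : nu X * (1 - nu P) <= 0.
  by rewrite mulrBr mulr1 subr_le0 mulrC {1}PX nu_mul.
by rewrite pmulr_lle0 // subr_gt0.
Qed.

Lemma matrix_norm_mul_lt1 (M N : 'M[R]_m) : nu M < 1 -> nu N < 1 -> nu (M *m N) < 1.
Proof.
move=> M_lt1 N_lt1; apply: le_lt_trans (nu_mul _ _) _.
by apply: le_lt_trans N_lt1; apply: ler_piMl => //; exact: ltW.
Qed.

Lemma matrix_norm_scalar_sub_lt (c : R) (X : 'M[R]_m) :
  nu (c%:M - X) < c -> nu (1%:M - c^-1 *: X) < 1.
Proof.
have [_ _ nuZ _ _] := nu_norm; move=> cX_lt_c.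
have c_gt0 : 0 < c := le_lt_trans (nu_ge0 _) cX_lt_c.
have -> : 1%:M - c^-1 *: X = c^-1 *: (c%:M - X).
  by rewrite scalerBr scale_scalar_mx mulVf ?gt_eqF.
by rewrite nuZ gtr0_norm ?invr_gt0 // ltr_pdivrMl // mulr1.
Qed.

End MatrixNorm.

Section ResidualCorrection.
Variables (R : realType) (m n : nat) (A : 'M[R]_(m, n)) (H : 'M[R]_(n, m)).
Variables (b : 'cV[R]_m) (x : nat -> 'cV[R]_n).
Hypothesis x_step : forall k, x k.+1 = x k + H *m (b - A *m x k).
Variable nu : 'M[R]_m -> R.
Hypothesis nu_norm : matrix_norm nu.
Hypothesis AH_contraction : nu (1%:M - A *m H) < 1.

Let E := 1%:M - A *m H.
Let res k := b - A *m x k.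
Let G := H *m invmx (A *m H).
Let x_lim := x 0 + G *m (b - A *m x 0).

Lemma residual_step k : res k.+1 = E *m res k.
Proof. by rewrite /res x_step mulmxDr mulmxA opprD addrA mulmxBl mul1mx. Qed.

Lemma residual_exprn k : res k = E ^+ k *m res 0.
Proof.
elim: k => [|k IHk]; first by rewrite expr0 mul1mx.
by rewrite residual_step IHk mulmxA exprS.
Qed.

Lemma AH_unitmx : A *m H \in unitmx.
Proof.
have := matrix_norm_lt1_unitmx nu_norm AH_contraction.
by rewrite opprB addrC subrK.
Qed.

Lemma residual_correction_invariant k : x k + G *m res k = x_lim.
Proof.
elim: k => // k <-; rewrite x_step -/(res k) residual_step -addrA; congr (_ + _).
rewrite /E mulmxBl mul1mx (mulmxBr G) (mulmxA G) /G mulmxKV ?AH_unitmx //.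
by rewrite addrC subrK.
Qed.

Lemma residual_correction_limit_solves : A *m x_lim = b.
Proof.
rewrite mulmxDr !mulmxA mulmxV ?AH_unitmx // mul1mx.
by rewrite addrC subrK.
Qed.

Lemma residual_correction_cvg : (x @ \oo --> x_lim)%classic.
Proof.
have [c c_ge0 dom] := mx_norm_le_matrix_norm nu_norm.
have nu_ge0 M : 0 <= nu M by case: nu_norm.
have err k : x_lim - x k = G *m (E ^+ k *m res 0).
  by rewrite -residual_exprn -(residual_correction_invariant k) addrC addKr.
pose K := m%:R * `|G| * (m%:R * `|res 0|).
have err_le k : `|x_lim - x k| <= K * `|E ^+ k|.
  rewrite err /K; apply: le_trans (mx_norm_mulmx_le _ _) _.
  rewrite -[leRHS]mulrA; apply: ler_wpM2l; first by rewrite mulr_ge0.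
  by rewrite mulrAC; exact: mx_norm_mulmx_le.
have E_exprn_le k : `|E ^+ k| <= c * nu 1%:M * nu E ^+ k.
  apply: le_trans (dom _) _; rewrite -mulrA; apply: ler_wpM2l => //.
  exact: matrix_norm_exprn_le.
apply: (geometric_bound_cvg (C := K * (c * nu 1%:M)) (q := nu E)).
  by rewrite nu_ge0 AH_contraction.
move=> k; apply: le_trans (err_le k) _.
by rewrite -[leRHS]mulrA; apply: ler_wpM2l; rewrite /K ?mulr_ge0.
Qed.

End ResidualCorrection.

Section GeneralizedGaussSeidel.
Variables (R : realType) (m p : nat) (B : 'M[R]_m) (Bt : 'M[R]_(m, p)).
Variable b : 'cV[R]_m.
Hypothesis B_diag : forall i, B i i != 0.
Hypothesis Bt_row : forall i, row i Bt != 0.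

Lemma lower_part_unitmx : lower_part B \in unitmx.
Proof.
rewrite unitmxE det_trig; last first.
  by apply/forallP => i; apply/forallP => j; apply/implyP => ij; rewrite mxE leqNgt ij.
by rewrite unitfE; apply/prodf_neq0 => i _; rewrite mxE leqnn.
Qed.

Lemma row_l1_gt0 i : 0 < row_l1 Bt i.
Proof.
rewrite lt_def sumr_ge0 ?andbT //; apply/eqP => /psumr_eq0P Bt_i0.
by move/eqP: (Bt_row i); apply; apply/rowP => j; rewrite !mxE; apply/normr0_eq0/Bt_i0.
Qed.

Lemma invmx_Nmat_mul (r : 'cV[R]_m) :
  invmx (Nmat Bt) *m r = \col_i (r i 0 / row_l1 Bt i).
Proof.
have N_unit : Nmat Bt \in unitmx.
  rewrite unitmxE det_diag unitfE; apply/prodf_neq0 => i _.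
  by rewrite mxE gt_eqF ?row_l1_gt0.
rewrite -[r in LHS](_ : Nmat Bt *m \col_i (r i 0 / row_l1 Bt i) = r) ?mulKmx //.
apply/matrixP => i j; rewrite mul_diag_mx !mxE (ord1 j).
by rewrite mulrC divfK // gt_eqF ?row_l1_gt0.
Qed.

Let L := lower_part B.
Let S := m%:R^-1 *: (smat Bt *m invmx (Nmat Bt)).
Let H := col_mx (invmx L *m (1%:M - Bt *m S)) S.

Lemma smat_dvec x1 x2 :
  smat Bt *m dvec B Bt b x1 x2 = S *m (b - (B *m x1 + Bt *m x2)).
Proof.
rewrite /S -scalemxAl -mulmxA invmx_Nmat_mul scalemxAr; congr (_ *m _).
apply/matrixP => i j; rewrite (ord1 j) !mxE.
by rewrite opprD addrA invfM mulrCA.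
Qed.

Lemma gauss_seidel_step x1 x2 x1' x2' :
    x2' = x2 + smat Bt *m dvec B Bt b x1 x2 ->
    x1' = invmx L *m (- ((B - L) *m x1) + b - Bt *m x2') ->
  col_mx x1' x2' = col_mx x1 x2 + H *m (b - row_mx B Bt *m col_mx x1 x2).
Proof.
move=> -> ->; rewrite mul_row_col smat_dvec mul_col_mx add_col_mx.
set r := b - _; congr col_mx.
have -> : - ((B - L) *m x1) + b - Bt *m (x2 + S *m r)
          = L *m x1 + (1%:M - Bt *m S) *m r.
  rewrite [in RHS]mulmxBl mul1mx mulmxBl mulmxDr mulmxA opprB /r -!addrA.
  by congr (_ + _); rewrite addrCA; congr (_ + _); rewrite !opprD addrA.
by rewrite mulmxDr mulKmx ?lower_part_unitmx // mulmxA.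
Qed.

Lemma gauss_seidel_error_matrix :
  1%:M - row_mx B Bt *m H = (1%:M - B *m invmx L) *m (1%:M - Bt *m S).
Proof.
by rewrite mul_row_col mulmxA mulmxBl mul1mx opprD addrA addrAC.
Qed.

Lemma gauss_seidel_contraction (nu : 'M[R]_m -> R) :
    matrix_norm nu -> nu (1%:M - B *m invmx L) < 1 ->
    nu (m%:R%:M - Bt *m smat Bt *m invmx (Nmat Bt)) < m%:R ->
  nu (1%:M - row_mx B Bt *m H) < 1.
Proof.
move=> nu_norm BL_lt1 /(matrix_norm_scalar_sub_lt nu_norm) BtS_lt1.
rewrite gauss_seidel_error_matrix matrix_norm_mul_lt1 //.
by rewrite /S -scalemxAr mulmxA.
Qed.

End GeneralizedGaussSeidel.

Theorem mainTheorem2 (R : realType) (m p : nat) (hp : (0 < p)%N)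
  (B : 'M[R]_m) (Bt : 'M[R]_(m, p)) (b : 'cV[R]_m)
  (hsol : exists x : 'cV[R]_(m + p), row_mx B Bt *m x = b)
  (hdiag : forall i : 'I_m, B i i != 0)
  (hrow : forall i : 'I_m, row i Bt != 0)
  (x1 : nat -> 'cV[R]_m) (x2 : nat -> 'cV[R]_p)
  (hx2 : forall k, x2 k.+1 = x2 k + smat Bt *m dvec B Bt b (x1 k) (x2 k))
  (hx1 : forall k, x1 k.+1 =
     invmx (lower_part B) *m (- ((B - lower_part B) *m x1 k) + b - Bt *m x2 k.+1))
  (nu : 'M[R]_m -> R) (hnu : matrix_norm nu)
  (h1 : nu (1%:M - B *m invmx (lower_part B)) < 1)
  (h2 : nu (m%:R%:M - Bt *m smat Bt *m invmx (Nmat Bt)) < m%:R) :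
  exists x : 'cV[R]_(m + p),
    ((fun k => col_mx (x1 k) (x2 k)) @ \oo --> x)%classic /\ row_mx B Bt *m x = b.
Proof.
pose x k := col_mx (x1 k) (x2 k).
have step k := gauss_seidel_step hdiag hrow (hx2 k) (hx1 k).
have contraction := gauss_seidel_contraction hnu h1 h2.
eexists; split.
- exact: (residual_correction_cvg (x := x) step hnu contraction).
- exact: (residual_correction_limit_solves b x hnu contraction).
Qed.
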